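(* In the algebra $\widehat{\mathcal R}(x)$ of non-associative formal power series without constant term in one variable $x$, the unique series $X$ with $\exp X=1+x$ is $$\log(1+x)=\sum_{\tau}\frac{B_\tau}{\tau!}\,\tau,$$ the sum running over all non-associative monomials $\tau$ in $x$.
   Context: $k$ is a field of characteristic $0$. $\widehat{\mathcal R}(x)$ consists of formal (infinite) linear combinations of non-associative monomials (rooted binary plane trees) in $x$ of degree $\ge1$, with the non-associative product extended bilinearly; $1+\widehat{\mathcal R}(x)$ lies in its unital completion. For $X\in\widehat{\mathcal R}(x)$, $\exp X=1+X+\frac{X^2}{2!}+\frac{X^2X}{3!}+\frac{(X^2X)X}{4!}+\cdots=\sum_{n\ge0}\frac{X^n}{n!}$ with left-normed powers $X^n=((XX)\cdots)X$. Bernoulli numbers $B_k$ are defined by $B_0=1$ and $\sum_{k=0}^{n-1}\frac{B_k}{k!(n-k)!}=0$ for $n\ge2$ (so $B_1=-1/2$). For a monomial $\tau$: if $\tau=x$ set $B_\tau=1$, $\tau!=1$; otherwise $\tau$ can be written uniquely as $(\cdots((x\tau_1)\tau_2)\cdots)\tau_k$ with $k\ge1$ and monomials $\tau_i$, and one sets $B_\tau=B_kB_{\tau_1}\cdots B_{\tau_k}$ and $\tau!=k!\,\tau_1!\cdots\tau_k!$. *)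

From HB Require Import structures.
From mathcomp Require Import all_boot all_order all_algebra.
Set Implicit Arguments. Unset Strict Implicit. Unset Printing Implicit Defensive.
Import Order.TTheory GRing.Theory Num.Theory.
Local Open Scope ring_scope.

(* Non-associative monomials in x = rooted binary plane trees.
   Leaf is the monomial x; Node t1 t2 is the product t1 t2. *)
Inductive tree : Type := Leaf | Node of tree & tree.

Fixpoint deg (t : tree) : nat :=
  match t with Leaf => 1%N | Node l r => (deg l + deg r)%N end.

(* Elements of \hat R(x): formal infinite linear combinations of monomials
   (of degree >= 1), i.e. coefficient functions tree -> k. *)
Definition series (k : fieldType) := tree -> k.

Definition xS (k : fieldType) : series k :=
  fun t => if t is Leaf then 1 else 0.

(* Bilinear extension of the product of monomials (t1,t2) |-> Node t1 t2:
   the coefficient of Node l r in F*G is F(l) G(r); that of x is 0. *)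
Definition mulS (k : fieldType) (F G : series k) : series k :=
  fun t => match t with Leaf => 0 | Node l r => F l * G r end.

(* powS X n = X^(n+1), left-normed: X^1 = X, X^(m+1) = X^m X. *)
Fixpoint powS (k : fieldType) (X : series k) (n : nat) : series k :=
  match n with 0%N => X | n'.+1 => mulS (powS X n') X end.

(* Elements of the unital completion 1 + ... are represented as
   (constant term, part of degree >= 1). *)
Definition useries (k : fieldType) := (k * series k)%type.

(* exp X = sum_{n>=0} X^n/n!.  Constant term 1 (from n = 0); since X has no
   constant term, X^n only involves monomials of degree >= n, so the
   coefficient of a monomial t in the (infinite) sum is the finite sum over
   1 <= n <= deg t (the terms with n > deg t vanish). *)
Definition expS (k : fieldType) (X : series k) : useries k :=
  (1, fun t => \sum_(n < deg t) powS X n t / (n.+1)`!%:R).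

Definition one_plus_x (k : fieldType) : useries k := (1, xS k).

(* Left-spine data: every t is uniquely (...((x t_1) t_2) ...) t_m with
   m >= 0 (m = 0 iff t = x).  spine B t = (m, B_{t_1}...B_{t_m},
   t_1!...t_m!), where B_{t_i} and t_i! are themselves computed recursively
   as B_{t_i} = B_{m_i} * prod and t_i! = m_i! * prod. *)
Fixpoint spine (k : fieldType) (B : nat -> k) (t : tree) : nat * k * nat :=
  match t with
  | Leaf => (0%N, 1, 1%N)
  | Node l r =>
      let: (m, p, f) := spine B l in
      let: (mr, pr, fr) := spine B r in
      (m.+1, p * (B mr * pr), (f * (mr`! * fr))%N)
  end.

Definition Btree (k : fieldType) (B : nat -> k) (t : tree) : k :=
  let: (m, p, _) := spine B t in B m * p.

Definition tfact (k : fieldType) (B : nat -> k) (t : tree) : nat :=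
  let: (m, _, f) := spine B t in (m`! * f)%N.

Definition logS (k : fieldType) (B : nat -> k) : series k :=
  fun t => Btree B t / (tfact B t)%:R.

From HB Require Import structures.
From mathcomp Require Import all_boot all_order all_algebra.
From Stdlib Require Import FunctionalExtensionality.
Set Implicit Arguments. Unset Strict Implicit. Unset Printing Implicit Defensive.
Import GRing.Theory.
Local Open Scope ring_scope.

(* Write a monomial as t = (...((x t_1) t_2)...) t_m (its left spine of
   length m) and put w(t) = prod_i B_{t_i}/t_i!, so that the coefficient of t
   in L := logS B is B_m/m! * w(t).  Since w(Node l r) = w(l) * L(r), an
   induction on n shows that the left-normed power L^(n+1) has coefficient
   B_(m-n)/(m-n)! * w(t) at t when n <= m, and 0 otherwise.  Hence the
   coefficient of t in exp L - 1 is w(t) * sum_(n<=m) B_(m-n)/((m-n)!(n+1)!),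
   which by the defining recursion of the Bernoulli numbers is 1 if m = 0
   (i.e. t = x) and 0 otherwise: exp L = 1 + x.
   Conversely exp is injective on series without constant term: the
   coefficient of t in exp X is X(t) plus terms X^(n+1)(t), n >= 1, which only
   involve coefficients of X at monomials of smaller degree; so two series
   with the same exponential agree by strong induction on the degree. *)

Lemma deg_gt0 (t : tree) : (0 < deg t)%N.
Proof. by elim: t => //= l IHl r _; rewrite addn_gt0 IHl. Qed.

Lemma deg_left (l r : tree) : (deg l < deg (Node l r))%N.
Proof. by rewrite /= -{1}[deg l]addn0 ltn_add2l deg_gt0. Qed.

Lemma deg_right (l r : tree) : (deg r < deg (Node l r))%N.
Proof. by rewrite /= -{1}[deg r]add0n ltn_add2r deg_gt0. Qed.

Section PowerLocality.
Variable k : fieldType.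

Lemma powS_local_le (X Y : series k) (n : nat) (t : tree) :
  (forall s, (deg s <= deg t)%N -> X s = Y s) -> powS X n t = powS Y n t.
Proof.
elim: n t => [|n IH] t agree; first exact: agree.
case: t agree => [|l r] agree //=.
have agree_l s : (deg s <= deg l)%N -> X s = Y s.
  by move=> hs; apply: agree; rewrite (leq_trans hs) // ltnW // deg_left.
by rewrite (IH l agree_l) agree // ltnW // deg_right.
Qed.

Lemma powS_local_lt (X Y : series k) (n : nat) (t : tree) :
  (forall s, (deg s < deg t)%N -> X s = Y s) -> powS X n.+1 t = powS Y n.+1 t.
Proof.
case: t => [|l r] agree //=.
have agree_l s : (deg s <= deg l)%N -> X s = Y s.
  by move=> hs; apply: agree; rewrite (leq_ltn_trans hs) // deg_left.
by rewrite (powS_local_le n agree_l) agree // deg_right.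
Qed.

Lemma expS_coef (X : series k) (t : tree) :
  (expS X).2 t = X t + \sum_(n < (deg t).-1) powS X n.+1 t / (n.+2)`!%:R.
Proof.
rewrite /expS /=; case: (deg t) (deg_gt0 t) => // d _.
by rewrite big_ord_recl /= divr1.
Qed.

Lemma expS_inj (X Y : series k) : expS X = expS Y -> X = Y.
Proof.
move=> eXY; apply: functional_extensionality => t.
elim: {t}(deg t) {-2}t (leqnn (deg t)) => [|N IH] t ht.
  by move: (deg_gt0 t); rewrite ltnNge ht.
have agree s : (deg s < deg t)%N -> X s = Y s.
  by move=> hs; apply: IH; rewrite -ltnS (leq_trans hs).
have := congr1 (fun E => E.2 t) eXY; rewrite !expS_coef.
under eq_bigr => n _ do rewrite (powS_local_lt n agree).
exact: addIr.
Qed.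

End PowerLocality.

Section Logarithm.
Variable k : fieldType.
Variable B : nat -> k.

Definition spine_len (t : tree) : nat := (spine B t).1.1.
Definition spine_prod (t : tree) : k := (spine B t).1.2.
Definition spine_fact (t : tree) : nat := (spine B t).2.

Definition weight (t : tree) : k := spine_prod t / (spine_fact t)%:R.

Lemma spine_Node (l r : tree) : spine B (Node l r) =
  ((spine_len l).+1, spine_prod l * (B (spine_len r) * spine_prod r),
   (spine_fact l * ((spine_len r)`! * spine_fact r))%N).
Proof.
rewrite /spine_len /spine_prod /spine_fact /=.
by case: (spine B l) => [[? ?] ?]; case: (spine B r) => [[? ?] ?].
Qed.

Lemma spine_len_Node (l r : tree) : spine_len (Node l r) = (spine_len l).+1.
Proof. by rewrite {1}/spine_len spine_Node. Qed.

Lemma spine_len_lt_deg (t : tree) : (spine_len t < deg t)%N.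
Proof.
elim: t => // l IHl r _; rewrite spine_len_Node /=.
by rewrite -addn1 leq_add // deg_gt0.
Qed.

Lemma logS_weight (t : tree) :
  logS B t = B (spine_len t) / (spine_len t)`!%:R * weight t.
Proof.
rewrite /logS /Btree /tfact /weight /spine_len /spine_prod /spine_fact.
by case: (spine B t) => [[? ?] ?]; rewrite natrM invfM mulrACA.
Qed.

Lemma weight_Node (l r : tree) : weight (Node l r) = weight l * logS B r.
Proof.
rewrite logS_weight /weight {1}/spine_prod {1}/spine_fact spine_Node /=.
by rewrite !natrM !invfM mulrACA; congr (_ * _); exact: mulrACA.
Qed.

Lemma powS_logS (n : nat) (t : tree) : powS (logS B) n t =
  if (n <= spine_len t)%N
  then B (spine_len t - n) / (spine_len t - n)`!%:R * weight t else 0.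
Proof.
elim: n t => [|n IH] t; first by rewrite /= logS_weight subn0.
case: t => [|l r] //=.
rewrite IH spine_len_Node weight_Node ltnS subSS.
by case: ifP => _; rewrite ?mul0r ?mulrA.
Qed.

Hypothesis hB0 : B 0%N = 1.
Hypothesis hB : forall n : nat, (2 <= n)%N ->
  \sum_(i < n) B i / (i`!%:R * (n - i)`!%:R) = 0.

Lemma bernoulli_convolution (m : nat) :
  \sum_(n < m.+1) B (m - n) / ((m - n)`!%:R * (n.+1)`!%:R) = (m == 0%N)%:R.
Proof.
case: m => [|m]; first by rewrite big_ord1 hB0 !mul1r invr1.
rewrite -[RHS](@hB m.+2) // (reindex_inj rev_ord_inj) /=.
apply: eq_bigr => i _; have hi : (i <= m.+1)%N by rewrite -ltnS.
by rewrite subSS subKn // -subSn.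
Qed.

Lemma expS_logS : expS (logS B) = one_plus_x k.
Proof.
rewrite /expS /one_plus_x; congr pair; apply: functional_extensionality => t.
set m := spine_len t.
pose term n := B (m - n) / (m - n)`!%:R * weight t / (n.+1)`!%:R.
have -> : \sum_(n < deg t) powS (logS B) n t / (n.+1)`!%:R
          = \sum_(n < m.+1) term n.
  rewrite (big_ord_widen _ term (spine_len_lt_deg t)) [RHS]big_mkcond.
  by apply: eq_bigr => n _; rewrite powS_logS -/m ltnS; case: ifP; rewrite ?mul0r.
have -> : \sum_(n < m.+1) term n
          = (\sum_(n < m.+1) B (m - n) / ((m - n)`!%:R * (n.+1)`!%:R)) * weight t.
  rewrite mulr_suml; apply: eq_bigr => n _.
  by rewrite /term invfM mulrAC mulrA -!mulrA [_^-1 * _]mulrC.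
rewrite bernoulli_convolution /m; clear term m.
by case: t => [|l r]; rewrite ?spine_len_Node ?mul0r // mul1r /weight /= divr1.
Qed.

End Logarithm.

Theorem mainTheorem18 (k : fieldType) (hchar : [pchar k] =i pred0)
  (B : nat -> k) (hB0 : B 0%N = 1)
  (hB : forall n : nat, (2 <= n)%N ->
          \sum_(i < n) B i / (i`!%:R * (n - i)`!%:R) = 0)
  (X : series k) :
  expS X = one_plus_x k <-> X = logS B.
Proof.
have exp_log : expS (logS B) = one_plus_x k := expS_logS hB0 hB.
split => [eX | ->]; last exact: exp_log.
by apply: expS_inj; rewrite eX exp_log.
Qed.
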